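(* Let $n\ge2$. There exist polynomials $p_1,\dots,p_{n-1}\in\mathbb{C}[x,y]$ in the variables $(x,y)\in\mathbb{C}^n\times\mathbb{C}^{n-1}$ such that, if $B(x,y)$ denotes the $n\times n$ matrix whose first row is $(x_1,p_1(x,y),\dots,p_{n-1}(x,y))$, whose first column is $(x_1,1,0,\dots,0)^T$, and whose lower-right $(n-1)\times(n-1)$ block is the matrix with $1$'s on the subdiagonal, last column $\big((-1)^ny_{n-1},(-1)^{n-1}y_{n-2},\dots,(-1)^3y_2,y_1\big)^T$ (i.e. entry $(-1)^{n-i+1}y_{n-i}$ in its $i$-th row) and all other entries $0$, then for every $(x,y)$ and every $j=2,\dots,n$, \[ \sum_{I\in\mathscr{I}^j:\,i_1=1}\det\big(B(x,y)_I\big)=x_j. \] Moreover, for fixed $(x,y)$, the numbers $p_1(x,y),\dots,p_{n-1}(x,y)$ are the unique complex numbers placed in positions $(1,2),\dots,(1,n)$ of such a matrix (with the other entries as described) for which these $n-1$ equations hold.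
   Context: $\mathscr{I}^j$ denotes the set of increasing $j$-tuples $I=(i_1<\dots<i_j)$ in $\{1,\dots,n\}$; for a matrix $A$, $A_I$ is the principal submatrix with rows and columns indexed by $I$. *)

From HB Require Import structures.
From mathcomp Require Import all_boot all_order all_algebra.
Set Implicit Arguments. Unset Strict Implicit. Unset Printing Implicit Defensive.
Import Order.TTheory GRing.Theory Num.Theory.
Local Open Scope ring_scope.

Inductive is_polyfun (R : ringType) (I : Type) : ((I -> R) -> R) -> Prop :=
| pf_const (c : R) : is_polyfun (fun _ => c)
| pf_var (i : I) : is_polyfun (fun v => v i)
| pf_add f g : is_polyfun f -> is_polyfun g -> is_polyfun (fun v => f v + g v)
| pf_mul f g : is_polyfun f -> is_polyfun g -> is_polyfun (fun v => f v * g v).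

Definition extn (R : ringType) (k : nat) (f : 'I_k -> R) (m : nat) : R :=
  oapp f 0 (insub m).

(* The matrix B (0-based indices i, j; the paper's are i+1, j+1).
   x : C^n, y : C^(n-1), p : the entries (1,2),...,(1,n). *)
Definition Bmat (R : ringType) (n : nat) (x : 'I_n -> R) (y p : 'I_n.-1 -> R)
  : 'M[R]_n :=
  \matrix_(i, j)
    if (val i == 0%N) && (val j == 0%N) then x i
    else if val i == 0%N then extn p (val j).-1
    else if val j == 0%N then (if val i == 1%N then 1 else 0)
    else if val j == n.-1 then (-1) ^+ (n - val i + 1) * extn y (n - val i - 1)
    else if val i == (val j).+1 then 1 else 0.

Definition pminor (R : comRingType) (n : nat) (A : 'M[R]_n) (I : {set 'I_n}) : R :=
  \det (mxsub (@enum_val _ (mem I)) (@enum_val _ (mem I)) A).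

(* the increasing tuple I has i_1 = 1 (0-based: contains index 0) *)
Definition first_in (n : nat) (I : {set 'I_n}) : bool :=
  [exists i in I, val i == 0%N].

(* the n-1 equations: for j = 2..n (0-based j = 1..n-1),
   sum over I in I^j with i_1 = 1 of det B_I = x_j *)
Definition minor_eqs (R : comRingType) (n : nat) (x : 'I_n -> R)
  (y p : 'I_n.-1 -> R) : Prop :=
  forall j : 'I_n, (0 < val j)%N ->
    \sum_(I : {set 'I_n} | (#|I| == (val j).+1)%N && first_in I)
       pminor (Bmat x y p) I = x j.

Definition join_xy (R : Type) (n : nat) (x : 'I_n -> R) (y : 'I_n.-1 -> R)
  (s : 'I_n + 'I_n.-1) : R :=
  match s with inl i => x i | inr k => y k end.

(* The first row (x_1, p_1, ..., p_{n-1}) of B is the only row depending on x_1 and p, so by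
   multilinearity of the determinant in that row every minor sum of the theorem splits as the
   same sum for another first row p' plus the sum for B with first row (0, p - p').  If p - p'
   vanishes in positions 1, ..., j-2, the latter sum over j-element sets reduces to the single
   set I = {1, ..., j} and equals (-1)^(j-1) (p_{j-1} - p'_{j-1}): for any other I there is an
   i < j with i in I and i+1 not in I, and column i of B_I is then zero.  So the j-th equation
   only involves p_1, ..., p_{j-1} and is affine in p_{j-1} with coefficient +-1; the system is
   triangular, has exactly one solution, and solving it by recursion uses only ring
   operations on x and y, so the solution is polynomial. *)

From mathcomp Require Import all_boot all_order all_algebra zify.
From Stdlib Require Import FunctionalExtensionality.
Set Implicit Arguments. Unset Strict Implicit. Unset Printing Implicit Defensive.
Import GRing.Theory.
Local Open Scope ring_scope.

Section PolynomialFunctions.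
Variables (R : comRingType) (I : Type).

Lemma polyfun_ext (f g : (I -> R) -> R) : f =1 g -> is_polyfun f -> is_polyfun g.
Proof. by move=> /functional_extensionality ->. Qed.

Lemma polyfun_opp (f : (I -> R) -> R) : is_polyfun f -> is_polyfun (fun v => - f v).
Proof.
move=> Pf; apply: (polyfun_ext (f := fun v => -1 * f v)); first by move=> v; rewrite mulN1r.
by apply: pf_mul => //; apply: pf_const.
Qed.

Lemma polyfun_sum (T : Type) (r : seq T) (P : pred T) (F : T -> (I -> R) -> R) :
  (forall i, is_polyfun (F i)) -> is_polyfun (fun v => \sum_(i <- r | P i) F i v).
Proof.
move=> PF; elim: r => [|a r IHr].
  by apply: (polyfun_ext (f := fun=> 0)); [move=> v; rewrite big_nil | apply: pf_const].
apply: (polyfun_ext (f := fun v => (if P a then F a v else 0) + \sum_(i <- r | P i) F i v)).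
  by move=> v; rewrite big_cons; case: (P a); rewrite ?add0r.
by apply: pf_add => //; case: (P a); [apply: PF | apply: pf_const].
Qed.

Lemma polyfun_prod (T : Type) (r : seq T) (P : pred T) (F : T -> (I -> R) -> R) :
  (forall i, is_polyfun (F i)) -> is_polyfun (fun v => \prod_(i <- r | P i) F i v).
Proof.
move=> PF; elim: r => [|a r IHr].
  by apply: (polyfun_ext (f := fun=> 1)); [move=> v; rewrite big_nil | apply: pf_const].
apply: (polyfun_ext (f := fun v => (if P a then F a v else 1) * \prod_(i <- r | P i) F i v)).
  by move=> v; rewrite big_cons; case: (P a); rewrite ?mul1r.
by apply: pf_mul => //; case: (P a); [apply: PF | apply: pf_const].
Qed.

Lemma polyfun_det m (A : (I -> R) -> 'M[R]_m) :
  (forall i j, is_polyfun (fun v => A v i j)) -> is_polyfun (fun v => \det (A v)).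
Proof.
move=> PA; apply: polyfun_sum => s; apply: pf_mul; first exact: pf_const.
exact: polyfun_prod.
Qed.

Lemma polyfun_extn k (P : 'I_k -> (I -> R) -> R) m :
  (forall i, is_polyfun (P i)) -> is_polyfun (fun v => extn (P^~ v) m).
Proof. by move=> PP; rewrite /extn; case: insub => [i|] /=; [apply: PP | apply: pf_const]. Qed.

End PolynomialFunctions.

Section Extension.
Variables (R : ringType) (k : nat).
Implicit Types f g : 'I_k -> R.

Lemma extn_val f (i : 'I_k) : extn f (val i) = f i.
Proof. by rewrite /extn valK. Qed.

Lemma extnD f g h m : (forall i, h i = f i + g i) -> extn h m = extn f m + extn g m.
Proof. by move=> h_fg; rewrite /extn; case: insub => [i|] /=; rewrite ?h_fg ?addr0. Qed.

Lemma extn_eq0 f m j : (forall i : 'I_k, (val i < m)%N -> f i = 0) ->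
  (j < m)%N -> extn f j = 0.
Proof.
by move=> f0 lt_jm; rewrite /extn; case: insubP => [i _ i_j|] //=; apply: f0; rewrite i_j.
Qed.

End Extension.

Definition init_seg n (j : nat) : {set 'I_n} := [set i : 'I_n | (val i <= j)%N].

Section InitialSegment.
Variables (n j : nat).
Hypothesis lt_jn : (j < n)%N.

Lemma map_val_enum_init_seg : map val (enum (init_seg n j)) = iota 0 j.+1.
Proof.
rewrite /enum_mem -enumT (eq_filter (a2 := preim val (leq^~ j))); last first.
  by move=> i; rewrite /= inE.
by rewrite -filter_map val_enum_ord (filter_iota_leq 0 lt_jn).
Qed.

Lemma card_init_seg : #|init_seg n j| = j.+1.
Proof. by rewrite cardE -(size_map val) map_val_enum_init_seg size_iota. Qed.

Lemma val_enum_init_seg (a : 'I_#|init_seg n j|) : val (enum_val a) = val a.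
Proof.
rewrite (enum_val_nth (enum_val a)) -(nth_map _ 0%N) -?cardE //.
by rewrite map_val_enum_init_seg nth_iota // -card_init_seg.
Qed.

Lemma init_seg_eq (I : {set 'I_n}) : #|I| = j.+1 -> first_in I ->
  (forall i i' : 'I_n, i \in I -> (val i < j)%N -> val i' = (val i).+1 -> i' \in I) ->
  I = init_seg n j.
Proof.
move=> cardI /existsP[z /andP[zI /eqP z0]] succI; apply/eqP.
rewrite eq_sym eqEcard cardI card_init_seg // leqnn andbT.
apply/subsetP=> i; rewrite inE.
suff: forall m (i : 'I_n), val i = m -> (m <= j)%N -> i \in I by apply.
elim=> [|m IHm] {}i i_m le_mj; first by rewrite (_ : i = z) //; apply: val_inj; rewrite i_m z0.
have lt_mn : (m < n)%N by rewrite (leq_trans _ (ltn_ord i)) ?i_m.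
by apply: (succI (Ordinal lt_mn)) => //; apply: IHm => //; apply: ltnW.
Qed.

Lemma first_in_init_seg : first_in (init_seg n j).
Proof. by apply/existsP; exists (Ordinal (leq_ltn_trans (leq0n j) lt_jn)); rewrite inE. Qed.

Lemma pminor_init_seg (R : comRingType) (A : 'M[R]_n) :
  pminor A (init_seg n j) = \det (mxsub (widen_ord lt_jn) (widen_ord lt_jn) A).
Proof.
rewrite /pminor; move: (@enum_val _ (mem (init_seg n j))) val_enum_init_seg.
move: card_init_seg; move: #|_| => N eN; subst N => f f_val.
congr (\det _); apply/matrixP=> a b; rewrite !mxE.
by congr (A _ _); apply: val_inj; rewrite /= f_val.
Qed.

End InitialSegment.

Lemma det_top_right_corner (R : comRingType) k (A : 'M[R]_k.+1) :
  (forall j, j != ord_max -> A ord0 j = 0) -> row' ord0 (col' ord_max A) = 1%:M ->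
  \det A = (-1) ^+ k * A ord0 ord_max.
Proof.
move=> A0 A1; rewrite (expand_det_row _ ord0) (bigD1 ord_max) //= big1 => [|j /A0 ->]; last first.
  by rewrite mul0r.
by rewrite addr0 /cofactor A1 det1 mulr1 add0n mulrC.
Qed.

Section PrincipalMinors.
Variables (R : comRingType) (n : nat).
Implicit Types (x : 'I_n -> R) (y p q r : 'I_n.-1 -> R) (I : {set 'I_n}).

Definition minor_sum x y p (j : nat) : R :=
  \sum_(I : {set 'I_n} | (#|I| == j.+1)%N && first_in I) pminor (Bmat x y p) I.

Lemma Bmat_row0 x y p (i k : 'I_n) : val i = 0%N ->
  Bmat x y p i k = if val k == 0%N then x i else extn p (val k).-1.
Proof. by move=> i0; rewrite mxE i0 eqxx. Qed.

Lemma Bmat_subdiag x y p (i k : 'I_n) : val i != 0%N -> (val k < n.-1)%N ->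
  Bmat x y p i k = (val i == (val k).+1 :> nat)%:R.
Proof.
move=> /negbTE i_neq0 lt_k; rewrite mxE i_neq0 /=.
case: eqP => [->|_]; first by case: (_ == _).
by rewrite (ltn_eqF lt_k); case: (_ == _).
Qed.

Lemma first_inP I :
  first_in I -> exists r0 : 'I_#|I|, forall a, (val (enum_val a) == 0%N) = (a == r0).
Proof.
case/existsP=> z /andP[zI /eqP z0]; exists (enum_rank_in zI z) => a.
by rewrite -z0 -{1}(enum_rankK_in zI zI) (inj_eq val_inj) (inj_eq enum_val_inj).
Qed.

Lemma pminor_Bmat_add x y p q r I : (forall k, r k = p k + q k) -> first_in I ->
  pminor (Bmat x y r) I = pminor (Bmat x y p) I + pminor (Bmat (fun=> 0) y q) I.
Proof.
move=> r_pq /first_inP[r0 r0P].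
set f := @enum_val _ (mem I).
rewrite /pminor -[LHS]/(\det (mxsub f f (Bmat x y r))).
rewrite (@determinant_multilinear _ _ _
  (mxsub f f (Bmat x y p)) (mxsub f f (Bmat (fun=> 0) y q)) r0 1 1) ?mul1r // {}/f.
- apply/rowP=> b; rewrite !mxE r0P eqxx /= !mul1r.
  by case: ifP => _; rewrite ?addr0 // (extnD _ r_pq).
- by apply/matrixP=> a b; rewrite !mxE r0P eq_sym (negbTE (neq_lift _ _)).
- by apply/matrixP=> a b; rewrite !mxE r0P eq_sym (negbTE (neq_lift _ _)).
Qed.

Lemma minor_sum_add x y p q r j : (forall k, r k = p k + q k) ->
  minor_sum x y r j = minor_sum x y p j + minor_sum (fun=> 0) y q j.
Proof.
by move=> r_pq; rewrite -big_split; apply: eq_bigr => I /andP[_]; apply: pminor_Bmat_add.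
Qed.

Section TopRow.
Variables (y q : 'I_n.-1 -> R) (m : nat).
Hypotheses (lt_m1n : (m.+1 < n)%N) (q0 : forall k : 'I_n.-1, (val k < m)%N -> q k = 0).

Lemma pminor_Bmat_top_gap I (i i' : 'I_n) :
  i \in I -> (val i <= m)%N -> val i' = (val i).+1 -> i' \notin I ->
  pminor (Bmat (fun=> 0) y q) I = 0.
Proof.
move=> iI le_im i'_succ i'I.
rewrite /pminor (expand_det_col _ (enum_rank_in iI i)) big1 // => a _.
rewrite mxE (enum_rankK_in iI iI).
have [a0|a_neq0] := eqVneq (val (enum_val a)) 0%N.
  rewrite Bmat_row0 //; case: eqP => [_|i_neq0]; first by rewrite mul0r.
  by rewrite (extn_eq0 q0) ?mul0r // prednK ?lt0n //; apply/eqP.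
rewrite Bmat_subdiag //; last by lia.
case: eqP => [a_succ|]; last by rewrite mul0r.
by move: i'I; rewrite (_ : i' = enum_val a) ?enum_valP //; apply: val_inj; rewrite i'_succ a_succ.
Qed.

Lemma pminor_Bmat_top_init_seg :
  pminor (Bmat (fun=> 0) y q) (init_seg n m.+1) = (-1) ^+ m.+1 * extn q m.
Proof.
rewrite pminor_init_seg det_top_right_corner => [|b b_neq|].
- by rewrite mxE Bmat_row0.
- rewrite mxE Bmat_row0 //=; case: eqP => // b_neq0; apply: (extn_eq0 q0).
  move: b_neq (ltn_ord b); rewrite -val_eqE /=; lia.
- apply/matrixP=> a b; have lt_b : (b < m.+1)%N := ltn_ord b.
  rewrite 3!mxE [RHS]mxE Bmat_subdiag /= /bump ?leq0n ?(leqNgt m.+1 b) ?lt_b //=.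
  by move: lt_b => /=; lia.
Qed.

Lemma minor_sum_Bmat_top : minor_sum (fun=> 0) y q m.+1 = (-1) ^+ m.+1 * extn q m.
Proof.
rewrite /minor_sum (bigD1 (init_seg n m.+1)) /=; last first.
  by rewrite card_init_seg // eqxx first_in_init_seg.
rewrite pminor_Bmat_top_init_seg big1 ?addr0 // => I /andP[/andP[/eqP cardI I0] neq_I].
have [//|nz] := eqVneq (pminor (Bmat (fun=> 0) y q) I) 0.
case/eqP: neq_I; apply: init_seg_eq => // i i' iI lt_i i'_succ.
by apply: contraR nz => i'I; apply/eqP/(pminor_Bmat_top_gap iI _ i'_succ i'I).
Qed.

End TopRow.

Lemma minor_eqs_unique x y p q : minor_eqs x y p -> minor_eqs x y q -> p =1 q.
Proof.
move=> p_eqs q_eqs; suff: forall m (k : 'I_n.-1), val k = m -> p k = q k by move=> + k; apply.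
elim/ltn_ind=> m IHm k k_m; subst m.
have lt_k1n : ((val k).+1 < n)%N by rewrite -ltn_predRL; apply: ltn_ord.
have p_k : minor_sum x y p (val k).+1 = x (Ordinal lt_k1n) := p_eqs (Ordinal lt_k1n) isT.
have q_k : minor_sum x y q (val k).+1 = x (Ordinal lt_k1n) := q_eqs (Ordinal lt_k1n) isT.
have d0 i : (val i < val k)%N -> q i - p i = 0.
  by move=> lt_ik; rewrite (IHm (val i) lt_ik i) ?subrr.
have q_pd i : q i = p i + (q i - p i) by rewrite addrC subrK.
have sd : (-1) ^+ (val k).+1 * (q k - p k) = 0.
  apply: (addrI (x (Ordinal lt_k1n))); rewrite addr0 -{2}q_k.
  by rewrite (minor_sum_add x y _ q_pd) p_k (minor_sum_Bmat_top y lt_k1n d0) extn_val.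
by apply/eqP; rewrite eq_sym -subr_eq0 -[q k - p k](signrMK (val k).+1) sd mulr0.
Qed.

End PrincipalMinors.

Section FirstRowSolution.
Variables (R : comRingType) (n : nat) (x : 'I_n -> R) (y : 'I_n.-1 -> R).

Definition next_entry (p : 'I_n.-1 -> R) (m : nat) : R :=
  (-1) ^+ m.+1 * (extn x m.+1 - minor_sum x y p m.+1).

Fixpoint first_row (m : nat) : 'I_n.-1 -> R :=
  if m is m'.+1 then
    fun k => first_row m' k + (val k == m')%:R * next_entry (first_row m') m'
  else fun=> 0.

Lemma minor_sum_first_rowS m N : (m.+1 < n)%N -> (m <= N)%N ->
  minor_sum x y (first_row N.+1) m.+1 =
  minor_sum x y (first_row N) m.+1 + (-1) ^+ m.+1 * ((m == N)%:R * next_entry (first_row N) N).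
Proof.
move=> lt_m1n le_mN.
have first_rowS k : first_row N.+1 k = first_row N k + (val k == N)%:R * next_entry (first_row N) N.
  by [].
have lt_m : (m < n.-1)%N by lia.
rewrite (minor_sum_add x y _ first_rowS) minor_sum_Bmat_top ?(extn_val _ (Ordinal lt_m)) //.
move=> k lt_km.
by rewrite ltn_eqF ?mul0r // (leq_trans lt_km).
Qed.

Lemma minor_sum_first_row m N : (m.+1 < n)%N -> (m < N)%N ->
  minor_sum x y (first_row N) m.+1 = extn x m.+1.
Proof.
move=> lt_m1n; elim: N => [|N IHN]; first by rewrite ltn0.
rewrite ltnS leq_eqVlt => /orP[/eqP <- | lt_mN].
  by rewrite minor_sum_first_rowS // eqxx mul1r /next_entry signrMK addrC subrK.
by rewrite minor_sum_first_rowS ?(ltnW lt_mN) // ltn_eqF // mul0r mulr0 addr0 IHN.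
Qed.

Lemma minor_eqs_first_row : minor_eqs x y (first_row n.-1).
Proof.
move=> j j0; have := @minor_sum_first_row (val j).-1 n.-1.
rewrite prednK // extn_val; apply; last rewrite -ltnS (ltn_predK (ltn_ord j)); exact: ltn_ord.
Qed.

End FirstRowSolution.

Section FirstRowPolynomial.
Variables (R : comRingType) (I : Type) (n : nat).
Variables (X : 'I_n -> (I -> R) -> R) (Y : 'I_n.-1 -> (I -> R) -> R).
Hypotheses (PX : forall i, is_polyfun (X i)) (PY : forall k, is_polyfun (Y k)).

Lemma polyfun_Bmat (P : 'I_n.-1 -> (I -> R) -> R) (i k : 'I_n) : (forall k, is_polyfun (P k)) ->
  is_polyfun (fun v => Bmat (X^~ v) (Y^~ v) (P^~ v) i k).
Proof.
move=> PP; apply: (polyfun_ext (fun v => esym (mxE _ _ _ _))).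
case: (_ && _); first exact: PX.
case: (_ == 0%N); first exact: polyfun_extn.
case: (_ == 0%N); first by case: (_ == 1%N); apply: pf_const.
case: (_ == n.-1); last by case: (_ == _); apply: pf_const.
by apply: pf_mul; [apply: pf_const | apply: polyfun_extn].
Qed.

Lemma polyfun_minor_sum (P : 'I_n.-1 -> (I -> R) -> R) j : (forall k, is_polyfun (P k)) ->
  is_polyfun (fun v => minor_sum (X^~ v) (Y^~ v) (P^~ v) j).
Proof.
move=> PP; apply: polyfun_sum => S; apply: polyfun_det => a b.
by apply: (polyfun_ext (fun v => esym (mxE _ _ _ _))); apply: polyfun_Bmat.
Qed.

Lemma polyfun_first_row m k : is_polyfun (fun v => first_row (X^~ v) (Y^~ v) m k).
Proof.
elim: m k => [|m IHm] k /=; first exact: pf_const.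
apply: pf_add => //; apply: pf_mul; first exact: pf_const.
apply: pf_mul; first exact: pf_const.
apply: pf_add; first exact: polyfun_extn.
by apply: polyfun_opp; apply: polyfun_minor_sum.
Qed.

End FirstRowPolynomial.

Theorem lemma2p3 (C : numClosedFieldType) (n : nat) (hn : (2 <= n)%N) :
  exists p : 'I_n.-1 -> (('I_n + 'I_n.-1) -> C) -> C,
    (forall k, is_polyfun (p k)) /\
    forall (x : 'I_n -> C) (y : 'I_n.-1 -> C),
      minor_eqs x y (fun k => p k (join_xy x y)) /\
      (forall q : 'I_n.-1 -> C, minor_eqs x y q ->
         forall k, q k = p k (join_xy x y)).
Proof.
exists (fun k v => first_row (fun i => v (inl i)) (fun i => v (inr i)) n.-1 k).
split=> [k | x y]; first by apply: polyfun_first_row => i; apply: pf_var.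
split=> [|q q_eqs k]; first exact: minor_eqs_first_row.
exact: minor_eqs_unique q_eqs (minor_eqs_first_row x y) k.
Qed.
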